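(* Let $(X,\Sigma,\mu)$ be a measure space, $n\ge1$, $\mathbb{F}\in\{\mathbb{R},\mathbb{C}\}$, and $h\in L^2(X,\mu;\mathbb{F})$ with $h\neq0$. Define $T:L^2(X,\mu;\mathbb{F}^n)\to\mathbb{F}^n$ by $T(F)=\int_X h(x)f_x\,d\mu(x)$ for $F=(f_x)_{x\in X}$ (integral taken coordinatewise). Let $d\in\mathbb{F}^n$ and assume $\dim L^2(X,\mu;\mathbb{F})\ge n$ if $d\ne0$, and $\dim L^2(X,\mu;\mathbb{F})\ge n+1$ if $d=0$. Then $T^{-1}(\{d\})$ contains a continuous frame $\Phi\in\mathcal{F}^{\mathbb{F}}_{(X,\mu),n}$.
   Context: A family $\Phi=(\varphi_x)_{x\in X}$ in $\mathbb{F}^n$ (with measurable coordinates) is a continuous frame indexed by $(X,\mu)$ if there are $0<A\le B$ with $A\|v\|^2\le\int_X|\langle v,\varphi_x\rangle|^2d\mu(x)\le B\|v\|^2$ for all $v\in\mathbb{F}^n$. $\mathcal{F}^{\mathbb{F}}_{(X,\mu),n}$ denotes the set of such frames, viewed as a subset of $L^2(X,\mu;\mathbb{F}^n)$. (Recall: a family in $\mathbb{F}^n$ is a continuous frame iff it lies in $L^2(X,\mu;\mathbb{F}^n)$ and its coordinate functions $\Phi^k=(\varphi^k_x)_{x\in X}$, $k=1,\dots,n$, are linearly independent in $L^2(X,\mu;\mathbb{F})$.) *)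

From HB Require Import structures.
From mathcomp Require Import all_boot all_order all_algebra.
From mathcomp Require Import all_classical all_reals all_analysis.
From mathcomp Require Import complex.
Set Implicit Arguments. Unset Strict Implicit. Unset Printing Implicit Defensive.
Import Order.TTheory GRing.Theory Num.Theory.
Local Open Scope classical_set_scope.
Local Open Scope ring_scope.

(* Scalars: the field F is encoded by a boolean [cplx]:
   cplx = true  : F = C  (= R[i]),
   cplx = false : F = R  (embedded in R[i] as the elements with Im = 0).
   All F-valued objects are represented as R[i]-valued objects lying in F. *)
Notation C R := (complex.complex R).

Section Defs.
Variables (R : realType).

Definition inF (cplx : bool) (z : C R) : Prop := cplx \/ complex.Im z = 0.

Definition normsq (z : C R) : R := complex.Re z ^+ 2 + complex.Im z ^+ 2.

Definition cinner (n : nat) (v w : 'I_n -> C R) : C R :=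
  \sum_(k < n) v k * complex.conjc (w k).

Definition vnormsq (n : nat) (v : 'I_n -> C R) : R := \sum_(k < n) normsq (v k).

Variables (d : measure_display) (X : measurableType d)
  (mu : {measure set X -> \bar R}).

Definition measC (f : X -> C R) : Prop :=
  measurable_fun setT (fun x => complex.Re (f x)) /\
  measurable_fun setT (fun x => complex.Im (f x)).

Definition L2F (cplx : bool) (f : X -> C R) : Prop :=
  (forall x, inF cplx (f x)) /\ measC f /\
  (\int[mu]_x (normsq (f x))%:E < +oo)%E.

Definition cint (f : X -> C R) : C R :=
  complex.Complex (fine (\int[mu]_x (complex.Re (f x))%:E))
                  (fine (\int[mu]_x (complex.Im (f x))%:E)).

Definition Top (n : nat) (h : X -> C R) (Phi : X -> 'I_n -> C R) : 'I_n -> C R :=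
  fun k => cint (fun x => h x * Phi x k).

Definition is_cframe (cplx : bool) (n : nat) (Phi : X -> 'I_n -> C R) : Prop :=
  (forall x k, inF cplx (Phi x k)) /\
  (forall k, measC (fun x => Phi x k)) /\
  exists A B : R, 0 < A /\ A <= B /\
    forall v : 'I_n -> C R, (forall k, inF cplx (v k)) ->
      ((A * vnormsq v)%:E <= \int[mu]_x (normsq (cinner v (Phi x)))%:E)%E /\
      (\int[mu]_x (normsq (cinner v (Phi x)))%:E <= (B * vnormsq v)%:E)%E.

(* dim L^2(X, mu; F) >= m : there are m elements of L^2(X,mu;F) that are
   linearly independent over F (in L^2, i.e. modulo mu-a.e. equality) *)
Definition L2dim_ge (cplx : bool) (m : nat) : Prop :=
  exists g : 'I_m -> X -> C R,
    (forall i, L2F cplx (g i)) /\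
    forall c : 'I_m -> C R, (forall i, inF cplx (c i)) ->
      {ae mu, forall x, \sum_(i < m) c i * g i x = 0} -> forall i, c i = 0.

End Defs.

From HB Require Import structures.
From mathcomp Require Import all_boot all_order all_algebra.
From mathcomp Require Import all_classical all_reals all_analysis.
From mathcomp Require Import complex.
From mathcomp Require Import measurable_realfun.
From mathcomp Require Import ring lra.
Import Order.TTheory GRing.Theory Num.Theory.
Local Open Scope classical_set_scope.
Local Open Scope ring_scope.
Set Implicit Arguments. Unset Strict Implicit. Unset Printing Implicit Defensive.

Section Scalars.
Context {R : realType}.
Implicit Types x y : C R.

Lemma cext x y : complex.Re x = complex.Re y -> complex.Im x = complex.Im y -> x = y.
Proof. by case: x => a b; case: y => c e /= -> ->. Qed.
Lemma cReD x y : @complex.Re R (x + y) = complex.Re x + complex.Re y.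
Proof. by case: x => a b; case: y. Qed.
Lemma cImD x y : @complex.Im R (x + y) = complex.Im x + complex.Im y.
Proof. by case: x => a b; case: y. Qed.
Lemma cReN x : @complex.Re R (- x) = - complex.Re x.
Proof. by case: x. Qed.
Lemma cImN x : @complex.Im R (- x) = - complex.Im x.
Proof. by case: x. Qed.
Lemma cReM x y :
  @complex.Re R (x * y) = complex.Re x * complex.Re y - complex.Im x * complex.Im y.
Proof. by case: x => a b; case: y. Qed.
Lemma cImM x y :
  @complex.Im R (x * y) = complex.Re x * complex.Im y + complex.Im x * complex.Re y.
Proof. by case: x => a b; case: y. Qed.
Lemma cReJ x : @complex.Re R (complex.conjc x) = complex.Re x.
Proof. by case: x. Qed.
Lemma cImJ x : @complex.Im R (complex.conjc x) = - complex.Im x.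
Proof. by case: x. Qed.
Lemma cImV x : @complex.Im R (x^-1) = - (complex.Im x / normsq x).
Proof. by case: x. Qed.

Definition cReIm := (cReD, cImD, cReN, cImN, cReM, cImM, cReJ, cImJ).

Lemma normsq_ge0 x : 0 <= normsq x.
Proof. rewrite /normsq; nra. Qed.

Lemma normsq_eq0 x : normsq x = 0 -> x = 0.
Proof.
case: x => a b; rewrite /normsq /= => /eqP.
by rewrite paddr_eq0 ?sqr_ge0 // !sqrf_eq0 => /andP[/eqP-> /eqP->].
Qed.

Lemma normsq0 : normsq (0 : C R) = 0.
Proof. by rewrite /normsq /=; ring. Qed.
Lemma normsqM x y : normsq (x * y) = normsq x * normsq y.
Proof. rewrite /normsq !cReIm; ring. Qed.
Lemma normsqJ x : normsq (complex.conjc x) = normsq x.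
Proof. rewrite /normsq !cReIm; ring. Qed.
Lemma normsqN x : normsq (- x) = normsq x.
Proof. rewrite /normsq !cReIm; ring. Qed.

Lemma normsqD_le x y : normsq (x + y) <= 2 * normsq x + 2 * normsq y.
Proof.
rewrite /normsq !cReIm.
have := sqr_ge0 (complex.Re x - complex.Re y).
have := sqr_ge0 (complex.Im x - complex.Im y).
rewrite !expr2 => h1 h2; nra.
Qed.

Lemma mulJ x : x * complex.conjc x = complex.Complex (normsq x) 0.
Proof. apply: cext; rewrite /= !cReIm /normsq /=; ring. Qed.

Lemma Complex_neq0 (r : R) : 0 < r -> complex.Complex r 0 != 0.
Proof. by move=> hr; apply/eqP => /(congr1 (@complex.Re R)) /= h; rewrite h ltxx in hr. Qed.

Lemma normsq_sum_le (m : nat) (F : 'I_m -> C R) :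
  normsq (\sum_(i < m) F i) <= 2 ^+ m * \sum_(i < m) normsq (F i).
Proof.
elim: m F => [|m IH] F; first by rewrite !big_ord0 normsq0 mulr0.
rewrite !big_ord_recl exprS; apply: le_trans (normsqD_le _ _) _.
have := IH (fun i => F (lift ord0 i)); have := normsq_ge0 (F ord0).
have : 1 <= 2 ^+ m :> R by apply: exprn_ege1; lra.
move: (normsq (F ord0)) (normsq (\sum_(i < m) F (lift ord0 i))) => a b.
move: (\sum_(i < m) normsq (F (lift ord0 i))) (2 ^+ m : R) => S p h1 h2 h3.
have : 0 <= (p - 1) * a by apply: mulr_ge0; lra.
nra.
Qed.

Lemma normsq_dot_le (m : nat) (w a : 'I_m -> C R) :
  normsq (\sum_(j < m) w j * a j) <=
    2 ^+ m * ((\sum_(j < m) normsq (a j)) * \sum_(j < m) normsq (w j)).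
Proof.
apply: le_trans (normsq_sum_le _) _; apply: ler_wpM2l; first exact: exprn_ge0.
rewrite mulr_sumr; apply: ler_sum => j _; rewrite normsqM mulrC.
apply: ler_wpM2r; first exact: normsq_ge0.
by rewrite (bigD1 j) //= lerDl; apply: sumr_ge0 => k _; exact: normsq_ge0.
Qed.

Lemma sum_lin (m : nat) (a b g : 'I_m -> C R) (y : C R) :
  \sum_(j < m) a j * (g j - b j * y) =
  \sum_(j < m) a j * g j - (\sum_(j < m) a j * b j) * y.
Proof. rewrite mulr_suml -sumrB; apply: eq_bigr => j _; ring. Qed.

Lemma inF0 c : inF c (0 : C R). Proof. by right. Qed.
Lemma inF1 c : inF c (1 : C R). Proof. by right. Qed.
Lemma inFR c (r : R) : inF c (complex.Complex r 0). Proof. by right. Qed.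
Lemma inFD c x y : inF c x -> inF c y -> inF c (x + y).
Proof.
by case=> [->|hx]; [left|case=> [->|hy]; [left|right; rewrite cImD hx hy addr0]].
Qed.
Lemma inFN c x : inF c x -> inF c (- x).
Proof. by case=> [->|hx]; [left|right; rewrite cImN hx oppr0]. Qed.
Lemma inFB c x y : inF c x -> inF c y -> inF c (x - y).
Proof. by move=> hx hy; apply: inFD => //; apply: inFN. Qed.
Lemma inFM c x y : inF c x -> inF c y -> inF c (x * y).
Proof.
by case=> [->|hx]; [left|case=> [->|hy]; [left|right; rewrite cImM hx hy; ring]].
Qed.
Lemma inFJ c x : inF c x -> inF c (complex.conjc x).
Proof. by case=> [->|hx]; [left|right; rewrite cImJ hx oppr0]. Qed.
Lemma inFV c x : inF c x -> inF c (x^-1).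
Proof. by case=> [->|hx]; [left|right; rewrite cImV hx mul0r oppr0]. Qed.
Lemma inF_sum c (m : nat) (F : 'I_m -> C R) :
  (forall i, inF c (F i)) -> inF c (\sum_(i < m) F i).
Proof. by move=> h; elim/big_rec: _ => [|i a _ ha]; [exact: inF0|exact: inFD]. Qed.

End Scalars.

Definition pad0 {R : realType} (m : nat) (k0 : 'I_m.+1) (e : 'I_m -> C R) :
  'I_m.+1 -> C R := fun k => if unlift k0 k is Some j then e j else 0.

Section Padding.
Context {R : realType} (m : nat) (k0 : 'I_m.+1).
Implicit Types e : 'I_m -> C R.

Lemma pad0_lift e j : pad0 k0 e (lift k0 j) = e j.
Proof. by rewrite /pad0 liftK. Qed.

Lemma pad0_k0 e : pad0 k0 e k0 = 0.
Proof. by rewrite /pad0 unlift_none. Qed.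

Lemma inF_pad0 c e : (forall j, inF c (e j)) -> forall k, inF c (pad0 k0 e k).
Proof. by move=> he k; rewrite /pad0; case: (unlift k0 k) => [j|]; [exact: he|exact: inF0]. Qed.

Lemma sum_pad0 e (G : 'I_m.+1 -> C R) :
  \sum_(k < m.+1) pad0 k0 e k * G k = \sum_(j < m) e j * G (lift k0 j).
Proof.
rewrite (bigD1_ord k0) //= pad0_k0 mul0r add0r.
by apply: eq_bigr => j _; rewrite pad0_lift.
Qed.

End Padding.

Section SquareIntegrable.
Context {R : realType} {d : measure_display} {X : measurableType d}
  (mu : {measure set X -> \bar R}).
Local Notation CR := (C R).

Definition Rint (r : X -> R) := mu.-integrable setT (EFin \o r).

Lemma RintD r s : Rint r -> Rint s -> Rint (fun x => r x + s x).
Proof. by move=> hr hs; apply: eq_integrable (integrableD _ hr hs). Qed.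

Lemma RintZ k r : Rint r -> Rint (fun x => k * r x).
Proof. by move=> hr; apply: eq_integrable (integrableZl _ k hr). Qed.

Lemma RintN r : Rint r -> Rint (fun x => - r x).
Proof. by move=> hr; apply: eq_integrable (RintZ (-1) hr) => // x _ /=; rewrite mulN1r. Qed.

Lemma Rint_le (r s : X -> R) :
  measurable_fun setT r -> (forall x, `|r x| <= s x) -> Rint s -> Rint r.
Proof.
move=> mr hrs hs; apply: le_integrable hs => //.
  exact/measurable_EFinP.
by move=> x _ /=; rewrite lee_fin; apply: le_trans (hrs x) _; exact: ler_norm.
Qed.

Lemma mfun_ext (r s : X -> R) :
  (forall x, r x = s x) -> measurable_fun setT s -> measurable_fun setT r.
Proof. by move=> h; rewrite (funext h). Qed.

Lemma measC_add (f g : X -> CR) : measC f -> measC g -> measC (fun x => f x + g x).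
Proof.
move=> [f1 f2] [g1 g2]; split.
  by apply: (mfun_ext (fun x => cReD _ _)); exact: measurable_funD.
by apply: (mfun_ext (fun x => cImD _ _)); exact: measurable_funD.
Qed.

Lemma measC_mul (f g : X -> CR) : measC f -> measC g -> measC (fun x => f x * g x).
Proof.
move=> [f1 f2] [g1 g2]; split.
  apply: (mfun_ext (fun x => cReM _ _)).
  exact: measurable_funB (measurable_funM f1 g1) (measurable_funM f2 g2).
apply: (mfun_ext (fun x => cImM _ _)).
exact: measurable_funD (measurable_funM f1 g2) (measurable_funM f2 g1).
Qed.

Lemma measC_cst (a : CR) : measC (fun _ : X => a).
Proof. by split; exact: measurable_cst. Qed.

Lemma measC_conj (f : X -> CR) : measC f -> measC (fun x => complex.conjc (f x)).
Proof.
move=> [f1 f2]; split; first exact: (mfun_ext (fun x => cReJ _)).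
by apply: (mfun_ext (fun x => cImJ _)); exact: measurable_funN.
Qed.

Lemma meas_normsq (f : X -> CR) : measC f -> measurable_fun setT (fun x => normsq (f x)).
Proof. by move=> [f1 f2]; apply: measurable_funD; apply: measurable_funX. Qed.

Definition L2 (f : X -> CR) := measC f /\ Rint (fun x => normsq (f x)).

Definition L1C (f : X -> CR) :=
  Rint (fun x => complex.Re (f x)) /\ Rint (fun x => complex.Im (f x)).

Lemma L2FE c (f : X -> CR) : L2F mu c f <-> (forall x, inF c (f x)) /\ L2 f.
Proof.
suff key : measC f -> (Rint (fun x => normsq (f x)) <->
    (\int[mu]_x (normsq (f x))%:E < +oo)%E).
  by split => -[h1 [h2 h3]]; do 2!split => //; apply/key.
move=> mf.
have E : (\int[mu]_x `|(EFin \o (fun x => normsq (f x))) x| =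
          \int[mu]_x (normsq (f x))%:E)%E.
  by apply: eq_integral => x _ /=; rewrite ger0_norm // normsq_ge0.
split; first by move/integrableP => [_]; rewrite E.
move=> h; apply/integrableP; split; last by rewrite E.
exact/measurable_EFinP/meas_normsq.
Qed.

Lemma L2_add (f g : X -> CR) : L2 f -> L2 g -> L2 (fun x => f x + g x).
Proof.
move=> [mf hf] [mg hg]; split; first exact: measC_add.
apply: (@Rint_le _ (fun x => 2 * normsq (f x) + 2 * normsq (g x))).
- by apply: meas_normsq; exact: measC_add.
- by move=> x; rewrite ger0_norm ?normsq_ge0 //; exact: normsqD_le.
- by apply: RintD; apply: RintZ.
Qed.

Lemma L2_mulc (a : CR) (f : X -> CR) : L2 f -> L2 (fun x => a * f x).
Proof.
move=> [mf hf]; split; first by apply: measC_mul => //; exact: measC_cst.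
by under eq_fun do rewrite normsqM; exact: RintZ.
Qed.

Lemma L2_sub_mulc (a : CR) (f g : X -> CR) : L2 f -> L2 g -> L2 (fun x => f x - a * g x).
Proof.
move=> hf hg; have := L2_add hf (L2_mulc (- a) hg).
by congr L2; apply: funext => x; rewrite mulNr.
Qed.

Lemma L2_conj (f : X -> CR) : L2 f -> L2 (fun x => complex.conjc (f x)).
Proof.
move=> [mf hf]; split; first exact: measC_conj.
by under eq_fun do rewrite normsqJ.
Qed.

Lemma L2_0 : L2 (fun _ : X => 0).
Proof.
split; first exact: measC_cst.
by under eq_fun do rewrite normsq0; exact: integrable0.
Qed.

Lemma L2_lin (m : nat) (c : 'I_m -> CR) (F : 'I_m -> X -> CR) :
  (forall i, L2 (F i)) -> L2 (fun x => \sum_(i < m) c i * F i x).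
Proof.
elim: m c F => [|m IH] c F hF.
  by under eq_fun do rewrite big_ord0; exact: L2_0.
under eq_fun do rewrite big_ord_recl.
apply: L2_add; first exact: L2_mulc.
exact: (IH (fun i => c (lift ord0 i)) (fun i => F (lift ord0 i))).
Qed.

(* The product of two L^2 functions is integrable, since the real and
   imaginary parts of xy are bounded by |x|^2 + |y|^2. *)
Lemma L1C_mul (f g : X -> CR) : L2 f -> L2 g -> L1C (fun x => f x * g x).
Proof.
move=> [mf hf] [mg hg]; have [mr mi] := measC_mul mf mg.
have sq := @sqr_ge0 _ : forall t : R, 0 <= t ^+ 2.
split; apply: Rint_le (RintD hf hg) => // x; rewrite ?cReM ?cImM /normsq ler_norml.
  set a := complex.Re (f x); set b := complex.Im (f x).
  set c := complex.Re (g x); set e := complex.Im (g x).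
  have := sq (a - c); have := sq (a + c); have := sq (b - e); have := sq (b + e).
  by rewrite !expr2 => h1 h2 h3 h4; apply/andP; split; nra.
set a := complex.Re (f x); set b := complex.Im (f x).
set c := complex.Re (g x); set e := complex.Im (g x).
have := sq (a - e); have := sq (a + e); have := sq (b - c); have := sq (b + c).
by rewrite !expr2 => h1 h2 h3 h4; apply/andP; split; nra.
Qed.

Definition RI (r : X -> R) := Rintegral mu setT r.

Lemma cintE (f : X -> CR) :
  cint mu f = complex.Complex (RI (fun x => complex.Re (f x))) (RI (fun x => complex.Im (f x))).
Proof. by []. Qed.

Lemma RI_ext r s : (forall x, r x = s x) -> RI r = RI s.
Proof. by move=> h; congr RI; apply: funext. Qed.

Lemma RI0 : RI (fun _ : X => 0) = 0.
Proof. by rewrite /RI /Rintegral integral0. Qed.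

Lemma RI_add r s : Rint r -> Rint s -> RI (fun x => r x + s x) = RI r + RI s.
Proof. by move=> hr hs; rewrite /RI RintegralD. Qed.

Lemma RI_scale k r : Rint r -> RI (fun x => k * r x) = k * RI r.
Proof. by move=> hr; rewrite /RI RintegralZl. Qed.

Lemma RI_opp r : Rint r -> RI (fun x => - r x) = - RI r.
Proof. by move=> hr; rewrite -mulN1r -RI_scale //; apply: RI_ext => x; rewrite mulN1r. Qed.

Lemma RI_sub r s : Rint r -> Rint s -> RI (fun x => r x - s x) = RI r - RI s.
Proof. by move=> hr hs; rewrite RI_add ?RI_opp //; exact: RintN. Qed.

Lemma cint_ext (f g : X -> CR) : (forall x, f x = g x) -> cint mu f = cint mu g.
Proof. by move=> h; congr cint; apply: funext. Qed.

Lemma cint_add (f g : X -> CR) : L1C f -> L1C g ->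
  cint mu (fun x => f x + g x) = cint mu f + cint mu g.
Proof.
move=> [f1 f2] [g1 g2]; rewrite !cintE; apply: cext; rewrite !cReIm /= -RI_add //.
  by apply: RI_ext => x; rewrite cReD.
by apply: RI_ext => x; rewrite cImD.
Qed.

Lemma cint_mulc (a : CR) (f : X -> CR) : L1C f ->
  cint mu (fun x => a * f x) = a * cint mu f.
Proof.
move=> [f1 f2]; rewrite !cintE; apply: cext; rewrite !cReIm /= -!RI_scale //.
  by rewrite -RI_sub; try exact: RintZ; apply: RI_ext => x; rewrite cReM.
by rewrite -RI_add; try exact: RintZ; apply: RI_ext => x; rewrite cImM.
Qed.

Lemma cint_conj (f : X -> CR) : L1C f ->
  cint mu (fun x => complex.conjc (f x)) = complex.conjc (cint mu f).
Proof.
move=> [f1 f2]; rewrite !cintE; apply: cext; rewrite !cReIm /=.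
  by apply: RI_ext => x; rewrite cReJ.
by rewrite -RI_opp //; apply: RI_ext => x; rewrite cImJ.
Qed.

End SquareIntegrable.

Section InnerProduct.
Context {R : realType} {d : measure_display} {X : measurableType d}
  (mu : {measure set X -> \bar R}).
Local Notation CR := (C R).
Local Notation L2 := (L2 mu).

Definition ip (f g : X -> CR) := cint mu (fun x => f x * complex.conjc (g x)).
Definition nrm (f : X -> CR) := RI mu (fun x => normsq (f x)).

Lemma nrm_ext f g : (forall x, f x = g x) -> nrm f = nrm g.
Proof. by move=> h; congr nrm; apply: funext. Qed.

Lemma nrm_ge0 f : 0 <= nrm f.
Proof. by apply: Rintegral_ge0 => x _; exact: normsq_ge0. Qed.

Lemma L1C_ip f g : L2 f -> L2 g -> L1C mu (fun x => f x * complex.conjc (g x)).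
Proof. by move=> hf hg; apply: L1C_mul => //; exact: L2_conj. Qed.

Lemma ip_addl f g k : L2 f -> L2 g -> L2 k ->
  ip (fun x => f x + g x) k = ip f k + ip g k.
Proof.
move=> hf hg hk; rewrite /ip -cint_add; try exact: L1C_ip.
by apply: cint_ext => x; rewrite mulrDl.
Qed.

Lemma ip_mulcl a f k : L2 f -> L2 k -> ip (fun x => a * f x) k = a * ip f k.
Proof.
move=> hf hk; rewrite /ip -cint_mulc; last exact: L1C_ip.
by apply: cint_ext => x; rewrite mulrA.
Qed.

Lemma ip_sub_mulcl a f g k : L2 f -> L2 g -> L2 k ->
  ip (fun x => f x - a * g x) k = ip f k - a * ip g k.
Proof.
move=> hf hg hk; rewrite -mulNr -(ip_mulcl _ hg hk) -ip_addl //; last exact: L2_mulc.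
by congr ip; apply: funext => x; rewrite mulNr.
Qed.

Lemma ip_conj f g : L2 f -> L2 g -> ip g f = complex.conjc (ip f g).
Proof.
move=> hf hg; rewrite /ip -cint_conj; last exact: L1C_ip.
by apply: cint_ext => x; rewrite rmorphM /= conjcK mulrC.
Qed.

Lemma ip_addr f g k : L2 f -> L2 g -> L2 k ->
  ip k (fun x => f x + g x) = ip k f + ip k g.
Proof.
move=> hf hg hk.
by rewrite (ip_conj (L2_add hf hg) hk) ip_addl // rmorphD (ip_conj hf hk) (ip_conj hg hk).
Qed.

Lemma ip_mulcr a f k : L2 f -> L2 k ->
  ip k (fun x => a * f x) = complex.conjc a * ip k f.
Proof.
move=> hf hk.
by rewrite (ip_conj (L2_mulc a hf) hk) ip_mulcl // rmorphM (ip_conj hf hk).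
Qed.

Lemma ip_self f : ip f f = complex.Complex (nrm f) 0.
Proof.
rewrite /ip cintE; apply: cext => /=; last rewrite -(RI0 mu);
  by apply: RI_ext => x; rewrite mulJ.
Qed.

Lemma ip0l k : ip (fun _ => 0) k = 0.
Proof.
rewrite /ip cintE; apply: cext => /=; rewrite -(RI0 mu);
  by apply: RI_ext => x; rewrite mul0r.
Qed.

Lemma ip_lin_l (m : nat) (c : 'I_m -> CR) (F : 'I_m -> X -> CR) k :
  (forall i, L2 (F i)) -> L2 k ->
  ip (fun x => \sum_(i < m) c i * F i x) k = \sum_(i < m) c i * ip (F i) k.
Proof.
elim: m c F => [|m IH] c F hF hk.
  transitivity (ip (fun _ => 0) k); last by rewrite ip0l big_ord0.
  by congr ip; apply: funext => x; rewrite big_ord0.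
have hS := L2_lin (fun i => c (lift ord0 i)) (fun i => hF (lift ord0 i)).
rewrite big_ord_recl -IH // -(ip_mulcl _ (hF ord0) hk).
rewrite -(ip_addl (L2_mulc _ (hF ord0)) hS hk).
by congr ip; apply: funext => x; rewrite big_ord_recl.
Qed.

Definition pcoef f u := ip f u / complex.Complex (nrm u) 0.

Lemma ip_proj_orth f u : L2 f -> L2 u -> 0 < nrm u ->
  ip (fun x => f x - pcoef f u * u x) u = 0.
Proof. by move=> hf hu hN; rewrite ip_sub_mulcl // ip_self mulfVK ?subrr ?Complex_neq0. Qed.

Lemma nrm_Pyth a u P : L2 u -> L2 P -> ip P u = 0 ->
  nrm (fun x => a * u x + P x) = normsq a * nrm u + nrm P.
Proof.
move=> hu hP h0.
have hau : L2 (fun x => a * u x) by exact: L2_mulc.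
have hS : L2 (fun x => a * u x + P x) by exact: L2_add.
have e := ip_self (fun x => a * u x + P x).
rewrite (ip_addl hau hP hS) (ip_mulcl a hu hS) !(ip_addr hau hP) // in e.
rewrite (ip_mulcr a hu hu) (ip_mulcr a hu hP) (ip_conj hP hu) h0 !ip_self in e.
have /= <- := congr1 (@complex.Re R) e.
rewrite !cReIm /= /normsq !(mulr0, mul0r, addr0, add0r, subr0, oppr0); ring.
Qed.

Lemma nrm_mulc a f : L2 f -> nrm (fun x => a * f x) = normsq a * nrm f.
Proof. by move=> [_ hf]; rewrite /nrm -RI_scale //; apply: RI_ext => x; exact: normsqM. Qed.

Lemma nrm_add_le f g : L2 f -> L2 g ->
  nrm (fun x => f x + g x) <= 2 * nrm f + 2 * nrm g.
Proof.
move=> hf hg; have [_ hfg] := L2_add hf hg; case: hf => _ hf; case: hg => _ hg.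
rewrite /nrm -!RI_scale // -RI_add; try exact: RintZ.
apply: le_Rintegral => //; first by apply: RintD; apply: RintZ.
by move=> x _; exact: normsqD_le.
Qed.

Lemma nrm_zero_comb a b f g : L2 f -> L2 g -> nrm f = 0 -> nrm g = 0 ->
  nrm (fun x => a * f x + b * g x) = 0.
Proof.
move=> hf hg h1 h2; apply/eqP; rewrite eq_le nrm_ge0 andbT.
apply: le_trans (nrm_add_le (L2_mulc a hf) (L2_mulc b hg)) _.
by rewrite !nrm_mulc // h1 h2 !mulr0 addr0.
Qed.

Lemma nrm_lin_le (m : nat) (w : 'I_m -> CR) (F : 'I_m -> X -> CR) :
  (forall i, L2 (F i)) ->
  nrm (fun x => \sum_(i < m) w i * F i x) <= 2 ^+ m * \sum_(i < m) normsq (w i) * nrm (F i).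
Proof.
elim: m w F => [|m IH] w F hF.
  rewrite big_ord0 mulr0 /nrm (@RI_ext _ _ _ mu _ (fun _ => 0)) ?RI0 // => x.
  by rewrite big_ord0 normsq0.
pose w' i := w (lift ord0 i); pose F' i := F (lift ord0 i).
have hS : L2 (fun x => \sum_(i < m) w' i * F' i x) by apply: L2_lin => i; exact: hF.
rewrite (@nrm_ext _ (fun x => w ord0 * F ord0 x + \sum_(i < m) w' i * F' i x)); last first.
  by move=> x; rewrite big_ord_recl.
apply: le_trans (nrm_add_le (L2_mulc _ (hF ord0)) hS) _.
rewrite nrm_mulc // big_ord_recl exprS.
have := IH w' F' (fun i => hF _).
have : 0 <= normsq (w ord0) * nrm (F ord0) by apply: mulr_ge0; [exact: normsq_ge0|exact: nrm_ge0].
have : 1 <= 2 ^+ m :> R by apply: exprn_ege1; lra.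
move: (normsq (w ord0) * nrm (F ord0)) (nrm (fun x => \sum_(i < m) w' i * F' i x)) => a b.
move: (\sum_(i < m) normsq (w' i) * nrm (F' i)) (2 ^+ m : R) => S p h1 h2 h3.
have : 0 <= (p - 1) * a by apply: mulr_ge0; lra.
nra.
Qed.

Lemma int_nrm f : L2 f -> (\int[mu]_x (normsq (f x))%:E)%E = (nrm f)%:E.
Proof. by move=> [_ hf]; rewrite /nrm /RI /Rintegral fineK //; exact: integrable_fin_num. Qed.

Lemma nrm0_ae f : L2 f -> nrm f = 0 -> {ae mu, forall x, f x = 0}.
Proof.
move=> hf h0.
have hm : measurable_fun setT (EFin \o (fun x => normsq (f x))).
  by apply/measurable_EFinP; apply: meas_normsq; case: hf.
have : (\int[mu]_(x in setT) `|(EFin \o (fun x => normsq (f x))) x| = 0)%E.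
  rewrite -[RHS](_ : (0%:E = 0)%E) // -h0 -int_nrm //.
  by apply: eq_integral => x _ /=; rewrite ger0_norm // normsq_ge0.
move/(ae_eq_integral_abs mu measurableT hm).
by apply: filterS => x /= /(_ I) [] /normsq_eq0.
Qed.

Lemma nrm_gt0 f : L2 f -> ~ {ae mu, forall x, f x = 0} -> 0 < nrm f.
Proof.
move=> hf hnz; rewrite lt_def nrm_ge0 andbT; apply/eqP => h0.
by apply: hnz; exact: nrm0_ae.
Qed.

Lemma ip_inF c f g : (forall x, inF c (f x)) -> (forall x, inF c (g x)) -> inF c (ip f g).
Proof.
case: c => hf hg; first by left.
right; rewrite /ip cintE /= -(RI0 mu); apply: RI_ext => x.
by have [|] := inFM (hf x) (inFJ (hg x)).
Qed.

Lemma inF_pcoef c f u :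
  (forall x, inF c (f x)) -> (forall x, inF c (u x)) -> inF c (pcoef f u).
Proof. by move=> hf hu; apply: inFM; [exact: ip_inF|exact/inFV/inFR]. Qed.

Lemma Top_ip n (h : X -> CR) (Phi : X -> 'I_n -> CR) :
  Top mu h Phi = fun k => ip (fun x => Phi x k) (fun x => complex.conjc (h x)).
Proof. by apply: funext => k; apply: cint_ext => x; rewrite conjcK mulrC. Qed.

End InnerProduct.

Section Frames.
Context {R : realType} {d : measure_display} {X : measurableType d}
  (mu : {measure set X -> \bar R}) (c : bool).
Local Notation CR := (C R).
Local Notation L2 := (L2 mu).
Local Notation nrm := (nrm mu).
Local Notation ip := (ip mu).

Definition indep (m : nat) (f : 'I_m -> X -> CR) :=
  forall w : 'I_m -> CR, (forall i, inF c (w i)) ->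
    nrm (fun x => \sum_(i < m) w i * f i x) = 0 -> forall i, w i = 0.

Lemma indep_nrm_gt0 (m : nat) (f : 'I_m -> X -> CR) i : indep f -> 0 < nrm (f i).
Proof.
move=> hI; rewrite lt_def nrm_ge0 andbT; apply/eqP => h0.
pose e k : CR := if k == i then 1 else 0.
have he k : inF c (e k) by rewrite /e; case: (k == i); [exact: inF1|exact: inF0].
suff : e i = 0 by rewrite /e eqxx => /eqP; rewrite oner_eq0.
apply: (hI e he _ i); rewrite -h0; apply: nrm_ext => x.
rewrite (bigD1 i) //= /e eqxx mul1r big1 ?addr0 // => k /negbTE ->.
by rewrite mul0r.
Qed.

Lemma indep_sub_first (m : nat) (f : 'I_m.+1 -> X -> CR) (al : 'I_m -> CR) :
  (forall j, inF c (al j)) -> indep f ->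
  indep (fun j x => f (lift ord0 j) x - al j * f ord0 x).
Proof.
move=> halF hI v hv hv0 j.
pose v' k := if unlift ord0 k is Some j then v j else - \sum_(j < m) v j * al j.
have hv'F k : inF c (v' k).
  rewrite /v'; case: (unlift ord0 k) => [j'|]; first exact: hv.
  by apply/inFN/inF_sum => j'; exact: inFM.
suff /(_ (lift ord0 j)) : forall k, v' k = 0 by rewrite /v' liftK.
apply: (hI v' hv'F); rewrite -hv0; apply: nrm_ext => x.
rewrite big_ord_recl sum_lin addrC /v' unlift_none mulNr.
by congr (_ - _); apply: eq_bigr => i _; rewrite liftK.
Qed.

(* Lower frame bound: lam sum_i |w_i|^2 <= ||sum_i w_i f_i||^2 for some
   lam > 0.  By induction on the size: sum_i w_i f_i = a f_0 + P, where P is a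
   combination of the projections p_j of f_(j+1) onto the orthogonal of f_0,
   which are independent by [indep_sub_first]; conclude by Pythagoras. *)
Lemma indep_lower_bound (m : nat) (f : 'I_m -> X -> CR) :
  (forall i, L2 (f i)) -> (forall i x, inF c (f i x)) -> indep f ->
  exists2 lam : R, 0 < lam & forall w, (forall i, inF c (w i)) ->
     lam * \sum_(i < m) normsq (w i) <= nrm (fun x => \sum_(i < m) w i * f i x).
Proof.
elim: m f => [|m IH] f hL hF hI.
  by exists 1 => // w _; rewrite big_ord0 mulr0; exact: nrm_ge0.
pose N := nrm (f ord0); have hN : 0 < N := indep_nrm_gt0 ord0 hI.
pose al j := pcoef mu (f (lift ord0 j)) (f ord0).
have halF j : inF c (al j) by apply: inF_pcoef => x; exact: hF.
pose p j x := f (lift ord0 j) x - al j * f ord0 x.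
have hpL j : L2 (p j) by exact: L2_sub_mulc.
have hpF j x : inF c (p j x) by apply: inFB => //; exact: inFM.
have [lam' hlam' Hlam'] := IH p hpL hpF (indep_sub_first halF hI).
pose A := \sum_(j < m) normsq (al j).
pose K := 2 ^+ m.+1 * A + 1.
have hK : 0 < K.
  apply: ltr_wpDl => //; apply: mulr_ge0; first exact: exprn_ge0.
  by apply: sumr_ge0 => j _; exact: normsq_ge0.
exists (Num.min (N / 2) (lam' / K)); first by rewrite lt_min !divr_gt0.
move=> w hw; set lam := Num.min _ _.
pose w' j := w (lift ord0 j); pose W := \sum_(j < m) normsq (w' j).
pose a := w ord0 + \sum_(j < m) w' j * al j.
pose P x := \sum_(j < m) w' j * p j x.
have hP0 : ip P (f ord0) = 0.
  rewrite ip_lin_l // big1 // => j _.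
  by rewrite ip_proj_orth ?mulr0.
have decomp : nrm (fun x => \sum_(i < m.+1) w i * f i x) = normsq a * N + nrm P.
  rewrite -(nrm_Pyth a (hL ord0) (L2_lin _ hpL) hP0); apply: nrm_ext => x.
  by rewrite big_ord_recl /P /p sum_lin /a /w'; ring.
have hPW : lam' * W <= nrm P by apply: Hlam' => j; exact: hw.
have hw0 : normsq (w ord0) <= 2 * normsq a + 2 ^+ m.+1 * A * W.
  have -> : w ord0 = a + - \sum_(j < m) w' j * al j by rewrite /a; ring.
  apply: le_trans (normsqD_le _ _) _; rewrite normsqN exprS -!mulrA lerD2l.
  by apply: ler_wpM2l => //; exact: normsq_dot_le.
have hsum : \sum_(i < m.+1) normsq (w i) <= 2 * normsq a + K * W.
  by rewrite big_ord_recl -/(W) /K mulrDl mul1r; lra.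
have l1 : lam * 2 <= N by rewrite -ler_pdivlMr // ge_min lexx.
have l2 : lam * K <= lam' by rewrite -ler_pdivlMr // ge_min lexx orbT.
have hlam : 0 < lam by rewrite lt_min !divr_gt0.
apply: le_trans (ler_wpM2l (ltW hlam) hsum) _; rewrite decomp.
have := mulr_ge0 (normsq_ge0 a) (eqbRL (subr_ge0 _ _) l1).
have : 0 <= W by apply: sumr_ge0 => j _; exact: normsq_ge0.
move=> hW; have := mulr_ge0 hW (eqbRL (subr_ge0 _ _) l2).
nra.
Qed.

(* The lower bound comes from [indep_lower_bound], the
   upper bound B = 2^n sum_k ||Phi^k||^2 + lam from [nrm_lin_le]. *)
Lemma frame_of_indep (n : nat) (Phi : X -> 'I_n -> CR) :
  (forall k, L2 (fun x => Phi x k)) -> (forall x k, inF c (Phi x k)) ->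
  indep (fun k x => Phi x k) -> is_cframe mu c Phi.
Proof.
move=> hL hF hI.
have [lam hlam Hlam] := indep_lower_bound hL (fun k x => hF x k) hI.
split => //; split; first by move=> k; case: (hL k).
pose S := \sum_(k < n) nrm (fun x => Phi x k).
have hS : 0 <= S by apply: sumr_ge0 => k _; exact: nrm_ge0.
have h2n : 0 <= 2 ^+ n :> R by exact: exprn_ge0.
exists lam, (2 ^+ n * S + lam); split => //; split.
  by rewrite lerDr; exact: mulr_ge0.
move=> v hv; pose w k := complex.conjc (v k).
have hV : 0 <= \sum_(k < n) normsq (w k) by apply: sumr_ge0 => k _; exact: normsq_ge0.
have E : (\int[mu]_x (normsq (cinner v (Phi x)))%:E)%E =
    (nrm (fun x => \sum_(k < n) w k * Phi x k))%:E.
  rewrite -(int_nrm (L2_lin w hL)).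
  apply: eq_integral => x _; congr EFin.
  rewrite /cinner -normsqJ rmorph_sum; congr normsq; apply: eq_bigr => k _.
  by rewrite rmorphM /= conjcK mulrC.
have -> : vnormsq v = \sum_(k < n) normsq (w k).
  by apply: eq_bigr => k _; rewrite normsqJ.
rewrite E !lee_fin; split; first by apply: Hlam => k; exact: inFJ.
have hterm : \sum_(k < n) normsq (w k) * nrm (fun x => Phi x k) <=
             S * \sum_(k < n) normsq (w k).
  rewrite mulr_sumr; apply: ler_sum => k _; rewrite mulrC.
  apply: ler_wpM2r; first exact: normsq_ge0.
  by rewrite /S (bigD1 k) //= lerDl; apply: sumr_ge0 => j _; exact: nrm_ge0.
apply: le_trans (nrm_lin_le w hL) _; apply: le_trans (ler_wpM2l h2n hterm) _.
by rewrite mulrA mulrDl lerDl; apply: mulr_ge0 => //; exact: ltW.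
Qed.

(* If the differences gp_i satisfy a
   nontrivial relation cc with cc_i0 <> 0, then for any relation e' among the
   others (e'_i0 = 0), al' cc - al e' is a relation among the g_i, where al and
   al' collect the u-components; this forces al' = 0, al <> 0 and e' = 0. *)
Lemma indep_drop_one (m : nat) (g : 'I_m.+1 -> X -> CR) (u : X -> CR)
    (be : 'I_m.+1 -> CR) :
  (forall i, L2 (g i)) -> L2 u -> (forall i, inF c (be i)) -> indep g ->
  exists i0 : 'I_m.+1, indep (fun j x => g (lift i0 j) x - be (lift i0 j) * u x).
Proof.
move=> hg hu hbe hI.
pose gp i x := g i x - be i * u x.
have hgp i : L2 (gp i) by exact: L2_sub_mulc.
have gp_sum (e : 'I_m.+1 -> CR) x : \sum_(i < m.+1) e i * gp i x =
    \sum_(i < m.+1) e i * g i x - (\sum_(i < m.+1) e i * be i) * u x.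
  exact: (sum_lin _ be (fun i => g i x)).
have [[cc [hcF [hc0 [i0 hi0]]]]|hgpI] := pselect (exists cc : 'I_m.+1 -> CR,
    (forall i, inF c (cc i)) /\ nrm (fun x => \sum_(i < m.+1) cc i * gp i x) = 0 /\
    exists i, cc i != 0); last first.
  exists ord0 => e heF he0 j; apply: contrapT => hej; apply: hgpI.
  exists (pad0 ord0 e); split; first exact: inF_pad0.
  split; last by exists (lift ord0 j); rewrite pad0_lift; apply/eqP.
  by rewrite -he0; apply: nrm_ext => x; rewrite sum_pad0.
exists i0 => e heF he0 j.
pose e' := pad0 i0 e; have he'F := inF_pad0 i0 heF.
have he'0 : nrm (fun x => \sum_(k < m.+1) e' k * gp k x) = 0.
  by rewrite -he0; apply: nrm_ext => x; rewrite sum_pad0.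
pose al := \sum_(i < m.+1) cc i * be i.
pose al' := \sum_(i < m.+1) e' i * be i.
have key i : al' * cc i - al * e' i = 0.
  apply: (hI (fun i => al' * cc i - al * e' i)) => [k|].
    by apply: inFB; apply: inFM => //; apply: inF_sum => l; exact: inFM.
  rewrite -(nrm_zero_comb al' (- al) (L2_lin _ hgp) (L2_lin _ hgp) hc0 he'0).
  apply: nrm_ext => x; rewrite !gp_sum -/al -/al'.
  have -> : \sum_(i < m.+1) (al' * cc i - al * e' i) * g i x =
      al' * \sum_(i < m.+1) cc i * g i x - al * \sum_(i < m.+1) e' i * g i x.
    by rewrite !mulr_sumr -sumrB; apply: eq_bigr => l _; ring.
  ring.
have hal' : al' = 0.
  have /eqP := key i0; rewrite /e' pad0_k0 mulr0 subr0 mulf_eq0 (negbTE hi0) orbF.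
  by move/eqP.
have hal : al != 0.
  apply: contra hi0 => /eqP hal0; apply/eqP; apply: (hI cc hcF _ i0).
  by rewrite -hc0; apply: nrm_ext => x; rewrite gp_sum -/al hal0 mul0r subr0.
have /eqP := key (lift i0 j); rewrite hal' mul0r sub0r /e' pad0_lift.
by rewrite oppr_eq0 mulf_eq0 (negbTE hal) => /eqP.
Qed.

End Frames.

Section Construction.
Context {R : realType} {d : measure_display} {X : measurableType d}
  (mu : {measure set X -> \bar R}) (c : bool).
Local Notation CR := (C R).
Local Notation L2 := (L2 mu).
Local Notation nrm := (nrm mu).
Local Notation ip := (ip mu).
Local Notation indep := (indep mu c).

Lemma L2dim_indep m : L2dim_ge mu c m -> exists g : 'I_m -> X -> CR,
  [/\ forall i, L2 (g i), forall i x, inF c (g i x) & indep g].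
Proof.
move=> [g [hg hgi]]; exists g.
have hgL i : L2 (g i) by have [] := (L2FE _ _ _).1 (hg i).
split => // [i|w hw h0]; first by have [] := (L2FE _ _ _).1 (hg i).
by apply: hgi => //; apply: nrm0_ae => //; exact: L2_lin.
Qed.

Variables (u : X -> CR).
Hypotheses (huL : L2 u) (huF : forall x, inF c (u x)) (hu : 0 < nrm u).

(* If dim L^2 >= m + 1, there are m independent F-valued functions orthogonal
   to u: project m + 1 independent functions onto the orthogonal of u and
   keep m of them by [indep_drop_one]. *)
Lemma orth_indep_family (m : nat) : L2dim_ge mu c m.+1 ->
  exists e : 'I_m -> X -> CR, [/\ forall j, L2 (e j), forall j x, inF c (e j x),
    forall j, ip (e j) u = 0 & indep e].
Proof.
move=> /L2dim_indep [g [hgL hgF hgI]].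
pose be i := pcoef mu (g i) u.
have hbe i : inF c (be i) by exact: inF_pcoef.
have [i0 hI0] := indep_drop_one hgL huL hbe hgI.
exists (fun j x => g (lift i0 j) x - be (lift i0 j) * u x); split => // j.
- exact: L2_sub_mulc.
- by move=> x; apply: inFB => //; exact: inFM.
- exact: ip_proj_orth.
Qed.

Lemma frame_in_kernel (n : nat) : L2dim_ge mu c n.+1 ->
  exists Phi : X -> 'I_n -> CR, [/\ is_cframe mu c Phi,
    forall k, L2F mu c (fun x => Phi x k) & forall k, ip (fun x => Phi x k) u = 0].
Proof.
move=> /orth_indep_family [e [heL heF he0 heI]].
exists (fun x k => e k x); split => // [|k]; first exact: frame_of_indep.
exact/L2FE.
Qed.

(* Adding independent functions orthogonal to u to a nonzero multiple of u in
   one slot k0, and arbitrary multiples of u elsewhere, keeps independence: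
   by Pythagoras a null combination has null components along u and along
   the orthogonal part. *)
Lemma indep_line_plus_orth (m : nat) (e : 'I_m -> X -> CR) (k0 : 'I_m.+1)
    (a : 'I_m.+1 -> CR) :
  (forall j, L2 (e j)) -> (forall j, ip (e j) u = 0) -> indep e -> a k0 != 0 ->
  indep (fun k x => a k * u x + pad0 k0 (fun j => e j x) k).
Proof.
move=> heL he0 heI hk0 v hv hv0.
pose al := \sum_(k < m.+1) v k * a k.
pose P x := \sum_(j < m) v (lift k0 j) * e j x.
have hPL : L2 P by exact: L2_lin.
have hP0 : ip P u = 0 by rewrite ip_lin_l // big1 // => j _; rewrite he0 mulr0.
have decomp : nrm (fun x => \sum_(k < m.+1) v k * (a k * u x + pad0 k0 (fun j => e j x) k))
    = normsq al * nrm u + nrm P.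
  rewrite -(nrm_Pyth al huL hPL hP0); apply: nrm_ext => x.
  have -> : P x = \sum_(k < m.+1) pad0 k0 (fun j => e j x) k * v k.
    by rewrite sum_pad0; apply: eq_bigr => j _; rewrite mulrC.
  by rewrite /al mulr_suml -big_split /=; apply: eq_bigr => k _; ring.
rewrite decomp in hv0.
have hnal := mulr_ge0 (normsq_ge0 al) (ltW hu); have hnP := nrm_ge0 mu P.
have hP : nrm P = 0 by lra.
have hvl j : v (lift k0 j) = 0 by exact: (heI _ (fun j => hv _) hP).
have hal : al = v k0 * a k0.
  by rewrite /al (bigD1_ord k0) //= big1 ?addr0 // => j _; rewrite hvl mul0r.
have /eqP : normsq al * nrm u = 0 by lra.
rewrite mulf_eq0 (gt_eqF hu) orbF => /eqP /normsq_eq0; rewrite hal => /eqP.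
rewrite mulf_eq0 (negbTE hk0) orbF => /eqP hvk0 k.
by case: (unliftP k0 k) => [j ->|->].
Qed.

(* The frames for d <> 0, given dim L^2 >= n + 1 (the frame has n + 1
   coordinates): with d_k0 <> 0, Phi^k = (d_k / ||u||^2) u + E^k, where
   E^k0 = 0 and the other E^k are independent functions orthogonal to u. *)
Lemma frame_with_value (n : nat) (dv : 'I_n.+1 -> CR) :
  (forall k, inF c (dv k)) -> dv <> (fun _ => 0) -> L2dim_ge mu c n.+1 ->
  exists Phi : X -> 'I_n.+1 -> CR, [/\ is_cframe mu c Phi,
    forall k, L2F mu c (fun x => Phi x k) & forall k, ip (fun x => Phi x k) u = dv k].
Proof.
move=> hdv dnz /orth_indep_family [e [heL heF he0 heI]].
have [k0 hk0] : exists k0, dv k0 != 0.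
  apply: contrapT => hno; apply: dnz; apply: funext => k.
  by apply: contrapT => hk; apply: hno; exists k; apply/eqP.
have hN := Complex_neq0 hu.
pose a k := dv k / complex.Complex (nrm u) 0.
pose E k x := pad0 k0 (fun j => e j x) k.
have hEL k : L2 (E k) by rewrite /E /pad0; case: unlift => [j|]; [exact: heL|exact: L2_0].
have hE0 k : ip (E k) u = 0 by rewrite /E /pad0; case: unlift => [j|]; [exact: he0|exact: ip0l].
pose Phi x k := a k * u x + E k x.
have hPL k : L2 (fun x => Phi x k) by apply: L2_add => //; exact: L2_mulc.
have hPF x k : inF c (Phi x k).
  apply: inFD; last exact: inF_pad0.
  by apply: inFM => //; apply: inFM => //; exact/inFV/inFR.
exists Phi; split => [|k|k]; last 2 first.
- exact/L2FE.
- rewrite (ip_addl (L2_mulc _ huL) (hEL k) huL) (ip_mulcl _ huL huL) ip_self hE0.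
  by rewrite addr0 mulfVK.
apply: frame_of_indep => //; apply: indep_line_plus_orth => //.
by rewrite mulf_eq0 invr_eq0 negb_or hk0.
Qed.

End Construction.

Unset Implicit Arguments. Set Strict Implicit. Set Printing Implicit Defensive.

Theorem corollary5p6 (R : realType) (cplx : bool) (d : measure_display)
  (X : measurableType d) (mu : {measure set X -> \bar R}) (n : nat)
  (hn : (1 <= n)%N) (h : X -> C R) (hL2 : L2F mu cplx h)
  (hnz : ~ {ae mu, forall x, h x = 0})
  (dv : 'I_n -> C R) (hdv : forall k, inF cplx (dv k))
  (hdim1 : dv <> (fun _ => 0) -> L2dim_ge mu cplx n)
  (hdim0 : dv = (fun _ => 0) -> L2dim_ge mu cplx n.+1) :
  exists Phi : X -> 'I_n -> C R,
    is_cframe mu cplx Phi /\ (forall k, L2F mu cplx (fun x => Phi x k)) /\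
    Top mu h Phi = dv.
Proof.
pose u x := complex.conjc (h x).
have [hhF hhL] := (L2FE _ _ _).1 hL2.
have huL : L2 mu u := L2_conj hhL.
have huF x : inF cplx (u x) := inFJ (hhF x).
have hu : 0 < nrm mu u.
  apply: (nrm_gt0 huL) => hae; apply: hnz; apply: filterS hae => x /eqP.
  by rewrite conjc_eq0 => /eqP.
suff [Phi [hPhi hL hT]] : exists Phi : X -> 'I_n -> C R, [/\ is_cframe mu cplx Phi,
    forall k, L2F mu cplx (fun x => Phi x k) & forall k, ip mu (fun x => Phi x k) u = dv k].
  by exists Phi; split => //; split => //; rewrite Top_ip; exact: funext.
have [dz|dnz] := pselect (dv = (fun _ => 0)).
  have [Phi [hPhi hL hT]] := frame_in_kernel huL huF hu (hdim0 dz).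
  by exists Phi; split => // k; rewrite hT dz.
case: n hn dv hdv hdim1 hdim0 dnz => [//|n] _ dv hdv hdim1 _ dnz.
exact: (frame_with_value huL huF hu hdv dnz (hdim1 dnz)).
Qed.
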